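(* Let $\Gamma$ be any set of FOML formulas and $\varphi$ any FOML formula (as defined in the context). If $\Gamma^{\mathrm{FOL}} \models_{\mathrm{FOL}} \varphi^{\mathrm{FOL}}$, then $\Gamma \models \varphi$.
   Context: FOML syntax. Fix pairwise disjoint, non-empty, denumerable sets $\mathcal{X}$ (rigid variables), $\mathcal{V}$ (flexible variables) and $\mathcal{O}$ (operator symbols, each with an arity in $\mathbb{N}$). Expressions are given by $e ::= x \mid v \mid op(e,\ldots,e) \mid e=e \mid \mathrm{FALSE} \mid e\Rightarrow e \mid \forall x: e \mid \nabla e$ with $x\in\mathcal{X}$, $v\in\mathcal{V}$, $op\in\mathcal{O}$ applied to as many arguments as its arity. There is no separation between terms and formulas; ''formula'' just means expression. Only rigid variables can be bound; free and bound variables are defined as usual. The usual connectives $\neg,\wedge,\vee,\equiv,\exists$ are defined as abbreviations. FOML semantics. A Kripke model is $\mathcal{M}=(\mathcal{I},\xi,\mathcal{W},R,\zeta,\nabla_\mathcal{M})$, where: - $\mathcal{I}$ is a first-order interpretation with universe $|\mathcal{I}|$ containing two distinct values $\mathsf{tt},\mathsf{ff}$, and $\mathcal{I}(op):|\mathcal{I}|^n\to|\mathcal{I}|$ for each $n$-ary $op$; - $\xi:\mathcal{X}\to|\mathcal{I}|$; - $\mathcal{W}$ is a non-empty set of states and $R\subseteq\mathcal{W}\times\mathcal{W}$; - $\zeta:\mathcal{V}\times\mathcal{W}\to|\mathcal{I}|$; - $\nabla_\mathcal{M}:2^{|\mathcal{I}|}\to|\mathcal{I}|$ satisfies $\nabla_\mathcal{M}(S)=\mathsf{tt}$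 iff $S\subseteq\{\mathsf{tt}\}$. The value $[\![e]\!]^\mathcal{M}_w$ at state $w$ is defined as follows. - $[\![x]\!]_w=\xi(x)$ and $[\![v]\!]_w=\zeta(v,w)$. - $[\![op(e_1,\ldots,e_n)]\!]_w=\mathcal{I}(op)([\![e_1]\!]_w,\ldots,[\![e_n]\!]_w)$. - $[\![e_1=e_2]\!]_w$ is $\mathsf{tt}$ if the two values are equal and $\mathsf{ff}$ otherwise. - $[\![\mathrm{FALSE}]\!]_w=\mathsf{ff}$. - $[\![\varphi\Rightarrow\psi]\!]_w=\mathsf{tt}$ if $[\![\varphi]\!]_w\neq\mathsf{tt}$ or $[\![\psi]\!]_w=\mathsf{tt}$, and $\mathsf{ff}$ otherwise. - $[\![\forall x:\varphi]\!]^\mathcal{M}_w=\mathsf{tt}$ if $[\![\varphi]\!]^{\mathcal{M}'}_w=\mathsf{tt}$ for every $\mathcal{M}'$ that differs from $\mathcal{M}$ only in the value $\xi(x)$, and $\mathsf{ff}$ otherwise. - $[\![\nabla\varphi]\!]_w=\nabla_\mathcal{M}(\{[\![\varphi]\!]_{w'}:(w,w')\in R\})$. Write $\mathcal{M},w\models\varphi$ for $[\![\varphi]\!]^\mathcal{M}_w=\mathsf{tt}$. The consequence relation is: $\Gamma\models\varphi$ iff for every Kripke model $\mathcal{M}$, if $\mathcal{M},w\models\psi$ for all $\psi\in\Gamma$ and all $w\in\mathcal{W}$, then $\mathcal{M},w\models\varphi$ for all $w\in\mathcal{W}$. FOL. First-order expressions are the expressions without $\nabla$. They are evaluated in first-order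 structures $(\mathcal{I},\xi)$ by the same clauses, with all variables treated as ordinary first-order variables. $\Gamma\models_{\mathrm{FOL}}\varphi$ means every first-order structure that makes every member of $\Gamma$ evaluate to $\mathsf{tt}$ makes $\varphi$ evaluate to $\mathsf{tt}$. Coalescing to FOL. Set $e^{\mathrm{FOL}}=(e^{\varepsilon})^{\mathrm{FOL}}$, where $\varepsilon$ is the empty list. For a list $\vec y$ of rigid variables, $(e^{\vec y})^{\mathrm{FOL}}$ is the first-order expression over the variable set $\mathcal{X}\cup\mathcal{V}$ (flexible variables becoming ordinary first-order variables) defined by: - $x\mapsto x$ and $v\mapsto v$; - $op(e_1,\ldots,e_n)\mapsto op((e_1^{\vec y})^{\mathrm{FOL}},\ldots,(e_n^{\vec y})^{\mathrm{FOL}})$; - $=$, $\mathrm{FALSE}$ and $\Rightarrow$ are translated homomorphically; - $(\forall x:e)^{\vec y}\mapsto\forall x:(e^{x,\vec y})^{\mathrm{FOL}}$; - $(\nabla e)^{\vec y}\mapsto[\lambda\vec z:\nabla e](\vec z)$, where $\vec z$ is the subsequence of $\vec y$ consisting of the rigid variables occurring free in $e$, and $[\lambda\vec z:\nabla e]$ is a fresh operator symbol of arity $|\vec z|$. Two such fresh symbols are identical exactly when their $\lambda$-expressions are $\alpha$-equivalent. For a set $\Gamma$, $\Gamma^{\mathrm{FOL}}=\{\psi^{\mathrm{FOL}}:\psi\in\Gamma\}$. *)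

From Stdlib Require Import List Arith Bool ClassicalEpsilon.
Import ListNotations.

(* Rigid variables, flexible variables and operator symbols: three
   denumerable sets, kept disjoint by the distinct constructors below. *)
Definition rvar := nat.
Definition fvar := nat.
Definition opsym := nat.

Inductive expr : Type :=
| ERig   (x : rvar)
| EFlex  (v : fvar)
| EOp    (o : opsym) (args : list expr)
| EEq    (a b : expr)
| EFalse
| EImp   (a b : expr)
| EAll   (x : rvar) (a : expr)
| ENabla (a : expr).

Fixpoint wf (ar : opsym -> nat) (e : expr) : bool :=
  match e with
  | ERig _ | EFlex _ | EFalse => true
  | EOp o args => Nat.eqb (length args) (ar o) && forallb (wf ar) args
  | EEq a b | EImp a b => wf ar a && wf ar b
  | EAll _ a | ENabla a => wf ar a
  end.

Fixpoint fv (e : expr) : list rvar :=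
  match e with
  | ERig x => [x]
  | EFlex _ | EFalse => []
  | EOp _ args => flat_map fv args
  | EEq a b | EImp a b => fv a ++ fv b
  | EAll x a => filter (fun y => negb (Nat.eqb y x)) (fv a)
  | ENabla a => fv a
  end.

Definition tv {D : Type} (tt ff : D) (P : Prop) : D :=
  if excluded_middle_informative P then tt else ff.

Definition upd {D : Type} (xi : rvar -> D) (x : rvar) (d : D) : rvar -> D :=
  fun y => if Nat.eqb y x then d else xi y.

(* The assignment xi of rigid variables is kept as a
   separate argument of the evaluation (it is the only component that
   varies in the clause for forall).  Operators are interpreted as
   functions on lists of values; only lists of the right length (the
   arity) matter for well-formed expressions. *)
Record kmodel : Type := KModel {
  kD : Type;
  ktt : kD;
  kff : kD;
  ktt_ff : ktt <> kff;
  kI : opsym -> list kD -> kD;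
  kW : Type;
  kW_inh : inhabited kW;
  kR : kW -> kW -> Prop;
  kzeta : fvar -> kW -> kD;
  knab : (kD -> Prop) -> kD;
  knab_spec : forall S : kD -> Prop,
      knab S = ktt <-> (forall d, S d -> d = ktt)
}.

Fixpoint keval (M : kmodel) (xi : rvar -> kD M) (w : kW M) (e : expr)
  {struct e} : kD M :=
  match e with
  | ERig x => xi x
  | EFlex v => kzeta M v w
  | EOp o args => kI M o (map (keval M xi w) args)
  | EEq a b => tv (ktt M) (kff M) (keval M xi w a = keval M xi w b)
  | EFalse => kff M
  | EImp a b => tv (ktt M) (kff M)
                   (keval M xi w a <> ktt M \/ keval M xi w b = ktt M)
  | EAll x a => tv (ktt M) (kff M)
                   (forall d : kD M, keval M (upd xi x d) w a = ktt M)
  | ENabla a => knab M (fun d => exists w', kR M w w' /\ keval M xi w' a = d)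
  end.

Definition kconseq (Gamma : expr -> Prop) (phi : expr) : Prop :=
  forall (M : kmodel) (xi : rvar -> kD M),
    (forall psi, Gamma psi -> forall w : kW M, keval M xi w psi = ktt M) ->
    forall w : kW M, keval M xi w phi = ktt M.

(* Nameless (de Bruijn) forms, used to identify the fresh operator
   symbols [lambda z : nabla e] up to alpha-equivalence. *)
Inductive dexpr : Type :=
| DBound (i : nat)
| DRig   (x : rvar)
| DFlex  (v : fvar)
| DOp    (o : opsym) (args : list dexpr)
| DEq    (a b : dexpr)
| DFalse
| DImp   (a b : dexpr)
| DAll   (a : dexpr)
| DNabla (a : dexpr).

Fixpoint idx (x : rvar) (ctx : list rvar) : option nat :=
  match ctx with
  | [] => None
  | y :: c => if Nat.eqb x y then Some 0 else option_map S (idx x c)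
  end.

(* [db ctx e]: nameless form of e, where ctx lists the enclosing binders,
   innermost first. *)
Fixpoint db (ctx : list rvar) (e : expr) : dexpr :=
  match e with
  | ERig x => match idx x ctx with Some i => DBound i | None => DRig x end
  | EFlex v => DFlex v
  | EOp o args => DOp o (map (db ctx) args)
  | EEq a b => DEq (db ctx a) (db ctx b)
  | EFalse => DFalse
  | EImp a b => DImp (db ctx a) (db ctx b)
  | EAll x a => DAll (db (x :: ctx) a)
  | ENabla a => DNabla (db ctx a)
  end.

(* FOL: operator symbols are those of O plus the fresh symbols
   [lambda z1 ... zn : nabla e], represented by their arity n and the
   nameless form of their body (so alpha-equivalent lambda-expressions
   give literally the same symbol). *)
Inductive fsym : Type :=
| FO   (o : opsym)
| FLam (n : nat) (body : dexpr).

Inductive fexpr : Type :=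
| FRig   (x : rvar)
| FFlex  (v : fvar)
| FApp   (s : fsym) (args : list fexpr)
| FEq    (a b : fexpr)
| FFalse
| FImp   (a b : fexpr)
| FAll   (x : rvar) (a : fexpr).

Record fstruct : Type := FStruct {
  fD : Type;
  ftt : fD;
  fff : fD;
  ftt_ff : ftt <> fff;
  fI : fsym -> list fD -> fD
}.

Fixpoint feval (S : fstruct) (xi : rvar -> fD S) (nu : fvar -> fD S)
  (e : fexpr) {struct e} : fD S :=
  match e with
  | FRig x => xi x
  | FFlex v => nu v
  | FApp s args => fI S s (map (feval S xi nu) args)
  | FEq a b => tv (ftt S) (fff S) (feval S xi nu a = feval S xi nu b)
  | FFalse => fff S
  | FImp a b => tv (ftt S) (fff S)
                   (feval S xi nu a <> ftt S \/ feval S xi nu b = ftt S)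
  | FAll x a => tv (ftt S) (fff S)
                   (forall d : fD S, feval S (upd xi x d) nu a = ftt S)
  end.

Definition fconseq (Delta : fexpr -> Prop) (f : fexpr) : Prop :=
  forall (S : fstruct) (xi : rvar -> fD S) (nu : fvar -> fD S),
    (forall g, Delta g -> feval S xi nu g = ftt S) ->
    feval S xi nu f = ftt S.

(* Coalescing.  [tr ys e] is (e^ys)^FOL; ys lists the enclosing bound
   rigid variables, innermost first ((forall x : e)^ys |-> forall x :
   (e^{x,ys})^FOL).  For nabla e, zs is the subsequence of ys of the rigid
   variables free in e, and the fresh symbol is [lambda zs : nabla e]
   (binders z1 ... zn, z1 outermost), applied to zs. *)
Fixpoint tr (ys : list rvar) (e : expr) : fexpr :=
  match e with
  | ERig x => FRig x
  | EFlex v => FFlex v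
  | EOp o args => FApp (FO o) (map (tr ys) args)
  | EEq a b => FEq (tr ys a) (tr ys b)
  | EFalse => FFalse
  | EImp a b => FImp (tr ys a) (tr ys b)
  | EAll x a => FAll x (tr (x :: ys) a)
  | ENabla a =>
      let zs := filter (fun y => existsb (Nat.eqb y) (fv a)) ys in
      FApp (FLam (length zs) (db (rev zs) (ENabla a))) (map FRig zs)
  end.

Definition to_fol (e : expr) : fexpr := tr [] e.

Definition set_to_fol (Gamma : expr -> Prop) : fexpr -> Prop :=
  fun f => exists psi, Gamma psi /\ f = to_fol psi.

(** Every Kripke model, together with an assignment and a state [w], yields a
    first-order structure on the same universe: the original operators keep
    their meaning, and a fresh symbol [lambda zs : nabla e] is interpreted as
    the value of [nabla e] at [w], its arguments supplying the values of the
    variables [zs].  The translation of every formula then evaluates in this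
    structure exactly as the formula does at [w], so a first-order consequence
    of the translations transfers to every state of every Kripke model. *)
From Stdlib Require Import List Arith ClassicalEpsilon FunctionalExtensionality.
Import ListNotations.

Section ExprNestedInd.
Variable P : expr -> Prop.
Hypotheses
  (HRig : forall x, P (ERig x))
  (HFlex : forall v, P (EFlex v))
  (HOp : forall o args, Forall P args -> P (EOp o args))
  (HEq : forall a b, P a -> P b -> P (EEq a b))
  (HFalse : P EFalse)
  (HImp : forall a b, P a -> P b -> P (EImp a b))
  (HAll : forall x a, P a -> P (EAll x a))
  (HNabla : forall a, P a -> P (ENabla a)).

Fixpoint expr_nested_ind (e : expr) : P e :=
  match e with
  | ERig x => HRig x
  | EFlex v => HFlex v
  | EOp o args => HOp o args
      ((fix go (l : list expr) : Forall P l :=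
         match l with
         | [] => Forall_nil _
         | h :: t => Forall_cons _ (expr_nested_ind h) (go t)
         end) args)
  | EEq a b => HEq a b (expr_nested_ind a) (expr_nested_ind b)
  | EFalse => HFalse
  | EImp a b => HImp a b (expr_nested_ind a) (expr_nested_ind b)
  | EAll x a => HAll x a (expr_nested_ind a)
  | ENabla a => HNabla a (expr_nested_ind a)
  end.
End ExprNestedInd.

Lemma tv_iff {D : Type} (tt ff : D) (P Q : Prop) :
  (P <-> Q) -> tv tt ff P = tv tt ff Q.
Proof.
  intros HPQ; unfold tv.
  destruct (excluded_middle_informative P), (excluded_middle_informative Q);
    tauto.
Qed.

Lemma idx_Some_nth_map {A : Type} (f : rvar -> A) (d : A) (l : list rvar)
  (y : rvar) (i : nat) :
  idx y l = Some i -> nth i (map f l) d = f y.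
Proof.
  revert i; induction l as [|a l IHl]; simpl; intros i Hidx; [discriminate|].
  destruct (Nat.eqb y a) eqn:Eya.
  - injection Hidx as <-; apply Nat.eqb_eq in Eya; subst; reflexivity.
  - destruct (idx y l) eqn:Ey; simpl in Hidx; [|discriminate].
    injection Hidx as <-; simpl; auto.
Qed.

Lemma idx_None_notin (l : list rvar) (y : rvar) : idx y l = None -> ~ In y l.
Proof.
  induction l as [|a l IHl]; simpl; intros Hidx; auto.
  destruct (Nat.eqb y a) eqn:Eya; [discriminate|].
  destruct (idx y l) eqn:Ey; simpl in Hidx; [discriminate|].
  intros [-> | Hin]; [rewrite Nat.eqb_refl in Eya; discriminate | exact (IHl eq_refl Hin)].
Qed.

Section Coalescing.
Variable M : kmodel.

Definition nabla_at (w : kW M) (f : kW M -> kD M) : kD M :=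
  knab M (fun d => exists w', kR M w w' /\ f w' = d).

Lemma nabla_at_ext (w : kW M) (f g : kW M -> kD M) :
  (forall w', f w' = g w') -> nabla_at w f = nabla_at w g.
Proof. intros Hfg; apply functional_extensionality in Hfg; now subst. Qed.

Lemma keval_agree_fv (e : expr) (xi1 xi2 : rvar -> kD M) (w : kW M) :
  (forall y, In y (fv e) -> xi1 y = xi2 y) ->
  keval M xi1 w e = keval M xi2 w e.
Proof.
  revert xi1 xi2 w.
  induction e as [x|v|o args IH|a b IHa IHb| |a b IHa IHb|x a IHa|a IHa]
    using expr_nested_ind; intros xi1 xi2 w Hagree; simpl in *.
  - auto.
  - reflexivity.
  - f_equal; apply map_ext_Forall.
    induction IH as [|e args He _ IHargs]; constructor.
    + apply He; intros y Hy; apply Hagree; simpl; apply in_or_app; auto.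
    + apply IHargs; intros y Hy; apply Hagree; simpl; apply in_or_app; auto.
  - rewrite (IHa xi1 xi2), (IHb xi1 xi2); auto;
      intros; apply Hagree, in_or_app; auto.
  - reflexivity.
  - rewrite (IHa xi1 xi2), (IHb xi1 xi2); auto;
      intros; apply Hagree, in_or_app; auto.
  - assert (Hupd : forall d y, In y (fv a) -> upd xi1 x d y = upd xi2 x d y).
    { intros d y Hy; unfold upd; destruct (Nat.eqb y x) eqn:Eyx; auto.
      apply Hagree, filter_In; rewrite Eyx; auto. }
    apply tv_iff; split; intros Hall d; rewrite <- (Hall d); apply IHa;
      [intros; symmetry|]; auto.
  - apply (nabla_at_ext w (fun w' => keval M xi1 w' a)); auto.
Qed.

Fixpoint deval (xi : rvar -> kD M) (env : list (kD M)) (w : kW M) (d : dexpr)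
  {struct d} : kD M :=
  match d with
  | DBound i => nth i env (ktt M)
  | DRig x => xi x
  | DFlex v => kzeta M v w
  | DOp o args => kI M o (map (deval xi env w) args)
  | DEq a b => tv (ktt M) (kff M) (deval xi env w a = deval xi env w b)
  | DFalse => kff M
  | DImp a b => tv (ktt M) (kff M)
                   (deval xi env w a <> ktt M \/ deval xi env w b = ktt M)
  | DAll a => tv (ktt M) (kff M) (forall d, deval xi (d :: env) w a = ktt M)
  | DNabla a => nabla_at w (fun w' => deval xi env w' a)
  end.

Definition ctx_assign (xi : rvar -> kD M) (ctx : list rvar) (env : list (kD M))
  (y : rvar) : kD M :=
  match idx y ctx with Some i => nth i env (ktt M) | None => xi y end.

Lemma deval_db (e : expr) (ctx : list rvar) (env : list (kD M))
  (xi : rvar -> kD M) (w : kW M) :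
  deval xi env w (db ctx e) = keval M (ctx_assign xi ctx env) w e.
Proof.
  revert ctx env w.
  induction e as [x|v|o args IH|a b IHa IHb| |a b IHa IHb|x a IHa|a IHa]
    using expr_nested_ind; intros ctx env w; simpl.
  - unfold ctx_assign; destruct (idx x ctx); reflexivity.
  - reflexivity.
  - f_equal; rewrite map_map; apply map_ext_Forall.
    eapply Forall_impl; [|exact IH]; simpl; auto.
  - now rewrite IHa, IHb.
  - reflexivity.
  - now rewrite IHa, IHb.
  - apply tv_iff; split; intros Hall d; rewrite <- (Hall d), ?IHa;
      apply keval_agree_fv; intros y _;
      unfold ctx_assign, upd; simpl; destruct (Nat.eqb y x); auto;
      destruct (idx y ctx); reflexivity.
  - apply nabla_at_ext; auto.
Qed.

Variables (xi : rvar -> kD M) (w : kW M).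

(** The arguments of [FLam n body] are the values of its binders, outermost
    first, whereas index 0 of [body] is the innermost one; hence the [rev]. *)
Definition coalesced_struct : fstruct :=
  FStruct (kD M) (ktt M) (kff M) (ktt_ff M)
    (fun s args => match s with
                   | FO o => kI M o args
                   | FLam _ body => deval xi (rev args) w body
                   end).

Definition state_valuation (v : fvar) : kD M := kzeta M v w.

(** [xi'] may differ from [xi] only on the enclosing bound variables [ys]:
    these are passed explicitly to the fresh symbols, while their other free
    rigid variables are fixed by [xi] in [coalesced_struct]. *)
Lemma feval_tr (e : expr) (ys : list rvar) (xi' : rvar -> kD M) :
  (forall y, ~ In y ys -> xi' y = xi y) ->
  feval coalesced_struct xi' state_valuation (tr ys e) = keval M xi' w e.
Proof.
  revert ys xi'.
  induction e as [x|v|o args IH|a b IHa IHb| |a b IHa IHb|x a IHa|a IHa]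
    using expr_nested_ind; intros ys xi' Hxi'; simpl.
  - reflexivity.
  - reflexivity.
  - f_equal; rewrite map_map; apply map_ext_Forall.
    eapply Forall_impl; [|exact IH]; simpl; auto.
  - now rewrite IHa, IHb.
  - reflexivity.
  - now rewrite IHa, IHb.
  - apply tv_iff; split; intros Hall d; rewrite <- (Hall d), ?IHa; auto;
      intros y Hy; unfold upd; destruct (Nat.eqb y x) eqn:Eyx;
      solve [ apply Nat.eqb_eq in Eyx; subst; exfalso; apply Hy; left; auto
            | apply Hxi'; intro; apply Hy; right; auto ].
  - rewrite map_map; simpl.
    set (zs := filter (fun y => existsb (Nat.eqb y) (fv a)) ys).
    apply nabla_at_ext; intros w'.
    rewrite deval_db, <- map_rev; apply keval_agree_fv; intros y Hy.
    unfold ctx_assign; destruct (idx y (rev zs)) eqn:Ey.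
    + now apply idx_Some_nth_map.
    + symmetry; apply Hxi'; intros Hys; apply (idx_None_notin _ _ Ey).
      apply -> in_rev; apply filter_In; split; auto.
      apply existsb_exists; exists y; split; [assumption | apply Nat.eqb_refl].
Qed.

Lemma feval_to_fol (e : expr) :
  feval coalesced_struct xi state_valuation (to_fol e) = keval M xi w e.
Proof. now apply feval_tr. Qed.

End Coalescing.

Theorem theorem1 (ar : opsym -> nat) (Gamma : expr -> Prop) (phi : expr) :
  (forall psi, Gamma psi -> wf ar psi = true) ->
  wf ar phi = true ->
  fconseq (set_to_fol Gamma) (to_fol phi) ->
  kconseq Gamma phi.
Proof.
  intros _ _ Hfol M xi HGamma w.
  rewrite <- (feval_to_fol M xi w).
  apply (Hfol (coalesced_struct M xi w)); intros g [psi [Hpsi ->]].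
  rewrite feval_to_fol; auto.
Qed.
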